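(* Let $n,d,k\in\mathbb{N}$, $\lambda,z\ge1$, $\beta\in(0,1]$ and $\xi\ge1$ such that $n\ge m$, where $m=k\cdot\lfloor 1+40^{z/2}\cdot2\xi/k\rfloor$. Let $\mathsf{M}\colon(\mathcal{B}_d)^n\to(\mathcal{B}_d)^{k+1}$ be a $(\lambda,\xi,\beta)$-approximation algorithm for $(k+1,z)$-clustering. Let $\widetilde{\mathsf{M}}\colon\{-1,1\}^{m\times d}\to\{-1,1\}^d$ be the mechanism that on input $x_1,\dots,x_m\in\{-1,1\}^d$ computes $(c_1,\dots,c_{k+1})=\mathsf{M}\big(\tfrac1{\sqrt d}x_1,\dots,\tfrac1{\sqrt d}x_m,\vec0,\dots,\vec0\big)$ (with $n-m$ copies of the zero vector), samples $j$ uniformly from $[k+1]$, and outputs $\mathrm{sign}(c_j)$. Then $\widetilde{\mathsf{M}}$ is $\left(k,\ \alpha=\frac1{160\cdot(2\lambda)^{2/z}},\ \frac{\beta}{k+1}\right)$-weakly-accurate.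
   Context: $\mathcal{B}_d=\{x\in\mathbb{R}^d:\|x\|_2\le1\}$. For $S\in(\mathcal{B}_d)^n$ and $C=(c_1,\dots,c_K)$, $\mathrm{COST}_z(C;S)=\sum_{x\in S}\min_{i\in[K]}\|x-c_i\|_2^z$ and $\mathrm{OPT}_{K,z}(S)=\min_{C\in(\mathbb{R}^d)^K}\mathrm{COST}_z(C;S)$. $\mathsf{M}$ is a $(\lambda,\xi,\beta)$-approximation algorithm for $(K,z)$-clustering if for every $S$, $\Pr_{C\sim\mathsf{M}(S)}[\mathrm{COST}_z(C;S)\le\lambda\mathrm{OPT}_{K,z}(S)+\xi]\ge\beta$. $\mathrm{sign}(u)=1$ if $u\ge0$ and $-1$ otherwise, coordinatewise. For a matrix $Z\in\{-1,1\}^{m'\times d}$ and $b\in\{-1,1\}$, $\mathcal{J}_Z^b$ is the set of columns all of whose entries equal $b$; $q$ strongly-agrees with $Z$ if $|\{j\in\mathcal{J}_Z^b:q^j=b\}|\ge0.9|\mathcal{J}_Z^b|$ for both $b$. A mechanism on $\{-1,1\}^{m\times d}$ ($k\mid m$) is $(k,\alpha,\beta')$-weakly-accurate if for every $X=(x_1,\dots,x_m)$ such that for all $t\in[k]$ and $b$, $|\mathcal{J}^b_{X_t}|\ge\frac12(1-\alpha)d$ with $X_t=(x_{(t-1)m/k+1},\dots,x_{tm/k})$, the probability that its output strongly-agrees with some $X_t$ is at least $\beta'$. *)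

From HB Require Import structures.
From mathcomp Require Import all_boot all_order all_algebra.
From mathcomp Require Import all_classical all_reals all_analysis.
Set Implicit Arguments. Unset Strict Implicit. Unset Printing Implicit Defensive.
Import Order.TTheory GRing.Theory Num.Theory.
Local Open Scope classical_set_scope.
Local Open Scope ring_scope.

Section Defs.
Variable R : realType.

Definition norm2 (d : nat) (x : 'rV[R]_d) : R := Num.sqrt (\sum_(i < d) x 0 i ^+ 2).

Definition in_ball (d : nat) (x : 'rV[R]_d) : Prop := norm2 x <= 1.

Definition point_cost (d K : nat) (z : R) (C : 'I_K.+1 -> 'rV[R]_d) (x : 'rV[R]_d) : R :=
  \big[Order.min/(norm2 (x - C ord0)) `^ z]_(j < K.+1) (norm2 (x - C j)) `^ z.

Definition cost (n d K : nat) (z : R) (C : 'I_K.+1 -> 'rV[R]_d) (S : 'I_n -> 'rV[R]_d) : R :=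
  \sum_(i < n) point_cost z C (S i).

Definition OPT (n d K : nat) (z : R) (S : 'I_n -> 'rV[R]_d) : R :=
  inf [set c | exists C : 'I_K.+1 -> 'rV[R]_d, c = cost z C S].

(* A randomized algorithm M : (B_d)^n -> (B_d)^{K+1} is modelled by its
   random seed w drawn from a probability space (Omega, P). *)
Definition approx_alg (d0 : measure_display) (Omega : measurableType d0)
  (P : probability Omega R) (n d K : nat)
  (M : ('I_n -> 'rV[R]_d) -> Omega -> 'I_K.+1 -> 'rV[R]_d)
  (lambda xi beta z : R) : Prop :=
  forall S : 'I_n -> 'rV[R]_d, (forall i, in_ball (S i)) ->
    (forall w j, in_ball (M S w j)) /\
    (forall (j : 'I_K.+1) (l : 'I_d), measurable_fun setT (fun w => M S w j 0 l)) /\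
    (beta%:E <= P [set w | (cost z (M S w) S <= lambda * OPT K z S + xi)%R])%E.

(* {-1,1} is encoded by bool: true <-> 1, false <-> -1 *)
Definition pm (b : bool) : R := if b then 1 else -1.
Definition sgnb (u : R) : bool := 0 <= u.

(* J^b of the t-th block X_t = (x_{t*(m/k)+1}, ..., x_{(t+1)*(m/k)}) (0-indexed t) *)
Definition blockJ (m d k : nat) (X : 'I_m -> 'I_d -> bool) (t : nat) (b : bool) : {set 'I_d} :=
  [set j : 'I_d | [forall i : 'I_m,
     ((t * (m %/ k) <= i) && (i < t.+1 * (m %/ k)))%N ==> (X i j == b)]].

Definition strongly_agrees (m d k : nat) (q : 'I_d -> bool) (X : 'I_m -> 'I_d -> bool) (t : nat) : Prop :=
  forall b : bool,
    (9 / 10 : R) * (#|blockJ k X t b|)%:R <= (#|[set j in blockJ k X t b | q j == b]|)%:R.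

(* A mechanism on {-1,1}^{m x d} with output in {-1,1}^d is given by the
   probabilities Pr X A = Pr[ output on X lies in A ].  (k, alpha, beta')-weak accuracy: *)
Definition weakly_accurate (m d k : nat)
  (Pr : ('I_m -> 'I_d -> bool) -> set ('I_d -> bool) -> \bar R) (alpha beta' : R) : Prop :=
  (k %| m)%N /\
  forall X : 'I_m -> 'I_d -> bool,
    (forall (t : 'I_k) (b : bool), (1 - alpha) / 2 * d%:R <= (#|blockJ k X t b|)%:R) ->
    (beta'%:E <= Pr X [set q | exists t : 'I_k, strongly_agrees k q X t])%E.

Definition embed_input (n m d : nat) (X : 'I_m -> 'I_d -> bool) : 'I_n -> 'rV[R]_d :=
  fun i => oapp (fun i' : 'I_m => (Num.sqrt (d%:R))^-1 *: \row_(l < d) pm (X i' l)) 0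
             (insub (val i) : option 'I_m).

Definition mech_tilde (d0 : measure_display) (Omega : measurableType d0)
  (P : probability Omega R) (n d K : nat)
  (M : ('I_n -> 'rV[R]_d) -> Omega -> 'I_K.+1 -> 'rV[R]_d) (m : nat)
  (X : 'I_m -> 'I_d -> bool) (A : set ('I_d -> bool)) : \bar R :=
  ((K.+1%:R)^-1)%:E *
    (\sum_(j < K.+1) P [set w | A (fun l => sgnb (M (@embed_input n m d X) w j 0%R l))])%E.

Definition m_of (k : nat) (z xi : R) : nat :=
  (k * Num.truncn (1 + 40 `^ (z / 2) * 2 * xi / k%:R))%N.

End Defs.

From HB Require Import structures.
From mathcomp Require Import all_boot all_order all_algebra.
From mathcomp Require Import all_classical all_reals all_analysis.
From mathcomp Require Import measurable_realfun lra ring.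
Set Implicit Arguments. Unset Strict Implicit. Unset Printing Implicit Defensive.
Import Order.TTheory GRing.Theory Num.Theory.
Local Open Scope ring_scope.

(* Feed M the rows of X scaled to the unit sphere, padded with zeros, and read the
   rows in k blocks of m/k.  Putting one center on each block's "majority vector"
   (the common sign on the columns where the block is constant, 0 elsewhere) and one
   at the origin costs at most alpha^(z/2) per row, so OPT <= m alpha^(z/2).  If no
   center strongly agrees with any block, then for every row and every center at
   least d/40 coordinates have the wrong sign, each contributing 1/d to the squared
   distance, so the cost is at least m (1/40)^(z/2).  The choices of alpha and m make
   this incompatible with cost <= lambda OPT + xi, so whenever M succeeds some center
   strongly agrees with some block, and the uniform choice of j finds it with
   probability 1/(k+1). *)

Section SignPoints.
Variables (R : realType) (d : nat).

Definition sign_point (x : 'I_d -> bool) : 'rV[R]_d :=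
  (Num.sqrt d%:R)^-1 *: \row_(l < d) pm R (x l).

Lemma norm2_powR (v : 'rV[R]_d) (z : R) :
  norm2 v `^ z = (\sum_(l < d) v 0 l ^+ 2) `^ (z / 2).
Proof.
rewrite /norm2 -powR12_sqrt ?sumr_ge0 // => [|l _]; last exact: sqr_ge0.
by rewrite -powRrM mulrC.
Qed.

Lemma ge_norm2_powR (v : 'rV[R]_d) (z r : R) : 0 <= z -> 0 <= r ->
  r <= \sum_(l < d) v 0 l ^+ 2 -> r `^ (z / 2) <= norm2 v `^ z.
Proof.
move=> z_ge0 r_ge0 r_le; rewrite norm2_powR.
by apply: ge0_ler_powR; rewrite ?nnegrE ?divr_ge0 // (le_trans r_ge0).
Qed.

Lemma le_norm2_powR (v : 'rV[R]_d) (z r : R) : 0 <= z ->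
  \sum_(l < d) v 0 l ^+ 2 <= r -> norm2 v `^ z <= r `^ (z / 2).
Proof.
move=> z_ge0 le_r; rewrite norm2_powR.
have sum_ge0 : 0 <= \sum_(l < d) v 0 l ^+ 2 by apply: sumr_ge0 => l _; exact: sqr_ge0.
by apply: ge0_ler_powR; rewrite ?nnegrE ?divr_ge0 // (le_trans sum_ge0).
Qed.

Lemma pm_sqr (b : bool) : pm R b ^+ 2 = 1.
Proof. by case: b; rewrite /pm ?sqrrN expr1n. Qed.

Lemma scaled_pm_sqr (b : bool) : ((Num.sqrt d%:R)^-1 * pm R b) ^+ 2 = d%:R^-1.
Proof. by rewrite exprMn pm_sqr mulr1 exprVn sqr_sqrtr. Qed.

Lemma sign_point_in_ball (x : 'I_d -> bool) : in_ball (sign_point x).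
Proof.
rewrite /in_ball /norm2 (eq_bigr (fun _ => d%:R^-1)) => [|l _]; last first.
  by rewrite !mxE scaled_pm_sqr.
rewrite sumr_const card_ord.
have [->|d_gt0] := posnP d; first by rewrite mulr0n sqrtr0.
by rewrite -(mulr_natr d%:R^-1) mulVf ?pnatr_eq0 -?lt0n // sqrtr1.
Qed.

(* On a coordinate of wrong sign, a * c <= 0, hence (a - c)^2 >= a^2 = 1/d. *)
Lemma sqdist_sign_point_ge (x : 'I_d -> bool) (c : 'rV[R]_d) :
  #|[set l | sgnb (c 0 l) != x l]|%:R / d%:R <=
    \sum_(l < d) (sign_point x - c) 0 l ^+ 2.
Proof.
rewrite (bigID (mem [set l | sgnb (c 0 l) != x l])) /=.
rewrite -[leLHS]addr0 lerD ?sumr_ge0 // => [|l _]; last exact: sqr_ge0.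
rewrite -sumr_const mulr_suml ler_sum // => l; rewrite inE /sgnb mul1r !mxE.
rewrite -(scaled_pm_sqr (x l)).
have sd : 0 <= (Num.sqrt (d%:R : R))^-1 by rewrite invr_ge0.
by case: (x l) => /=; rewrite /pm ?mulr1 ?mulrN1; case: leP => // hc _; nra.
Qed.

Lemma sqdist_sign_point_restrict (x : 'I_d -> bool) (U : {set 'I_d}) (v : 'I_d -> R) :
  {in U, forall l, v l = pm R (x l)} -> {in ~: U, forall l, v l = 0} ->
  \sum_(l < d) (sign_point x - (Num.sqrt d%:R)^-1 *: \row_l v l) 0 l ^+ 2 =
    #|~: U|%:R / d%:R.
Proof.
move=> vU vC; rewrite (eq_bigr (fun l => if l \in ~: U then d%:R^-1 else 0)) => [|l _].
  by rewrite -big_mkcond sumr_const mulr_natl.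
rewrite !mxE; case: ifPn => [/vC -> | ]; first by rewrite mulr0 subr0 scaled_pm_sqr.
by rewrite inE negbK => /vU ->; rewrite subrr expr0n.
Qed.

End SignPoints.

Section Blocks.
Variables (R : realType) (m d k : nat) (X : 'I_m -> 'I_d -> bool).

Definition in_block (t : nat) (i : 'I_m) : bool :=
  (t * (m %/ k) <= i < t.+1 * (m %/ k))%N.

Lemma blockJ_in_block t b (i : 'I_m) l :
  in_block t i -> l \in blockJ k X t b -> X i l = b.
Proof. by move=> it; rewrite inE => /forallP /(_ i) /implyP /(_ it) /eqP. Qed.

Lemma in_block_divn (i : 'I_m) : (0 < k)%N -> (k %| m)%N ->
  (i %/ (m %/ k) < k)%N /\ in_block (i %/ (m %/ k)) i.
Proof.
move=> k_gt0 /dvdnP [T mE]; have i_lt : (i < T * k)%N by rewrite -mE.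
have T_gt0 : (0 < T)%N by case: T mE i_lt.
rewrite /in_block; have -> : (m %/ k = T)%N by rewrite mE mulnK.
by rewrite ltn_divLR // mulnC i_lt leq_divM ltn_ceil.
Qed.

Variables (alpha : R) (t : nat) (i : 'I_m).
Hypotheses (i_in_t : in_block t i)
  (large_blocks : forall b, (1 - alpha) / 2 * d%:R <= #|blockJ k X t b|%:R).

Lemma card_sign_disagree_gt (q : 'I_d -> bool) :
  alpha <= 1 / 2 -> ~ strongly_agrees R k q X t ->
  d%:R / 40 < #|[set l | q l != X i l]|%:R :> R.
Proof.
move=> alpha_le /existsNP [b /negP]; rewrite -ltNge setIdE => few.
set J := blockJ k X t b in few; have J_large := large_blocks b.
have J_split := cardsID [set l | q l == b] J.
have sub : J :\: [set l | q l == b] \subset [set l | q l != X i l].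
  apply/fintype.subsetP => l; rewrite finset.in_setD inE => /andP [qb lJ].
  by rewrite inE (blockJ_in_block i_in_t lJ).
have := subset_leq_card sub; rewrite -(ler_nat R).
move: J_split => /(congr1 (fun n => n%:R : R)); rewrite natrD => J_split.
(* |J \ agreeing| > |J| / 10 >= (1 - alpha) d / 20 >= d / 40 *)
have := ler0n R #|J|; nra.
Qed.

Lemma sqdist_disagree_gt (c : 'rV[R]_d) :
  alpha <= 1 / 2 -> ~ strongly_agrees R k (fun l => sgnb (c 0 l)) X t ->
  1 / 40 < \sum_(l < d) (sign_point R (X i) - c) 0 l ^+ 2.
Proof.
move=> alpha_le disagree; have few := card_sign_disagree_gt alpha_le disagree.
have d_gt0 : (0 : R) < d%:R.
  have := max_card (mem [set l | sgnb (c 0 l) != X i l]).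
  by rewrite card_ord -(ler_nat R); lra.
apply: lt_le_trans (sqdist_sign_point_ge _ _).
by rewrite ltr_pdivlMr //; lra.
Qed.

Definition block_center (t : nat) : 'rV[R]_d :=
  (Num.sqrt d%:R)^-1 *: \row_l (if l \in blockJ k X t true then 1
                               else if l \in blockJ k X t false then -1 else 0).

Lemma card_unmarked_le :
  #|~: (blockJ k X t true :|: blockJ k X t false)|%:R <= alpha * d%:R.
Proof.
have disj : blockJ k X t true :&: blockJ k X t false = finset.set0.
  apply/setP => l; rewrite finset.in_set0 finset.in_setI; apply/negbTE/negP.
  by move=> /andP [/(blockJ_in_block i_in_t) + /(blockJ_in_block i_in_t)] => ->.
have := cardsUI (blockJ k X t true) (blockJ k X t false).
have := cardsC (blockJ k X t true :|: blockJ k X t false).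
rewrite disj cards0 addn0 card_ord.
move=> /(congr1 (fun n => n%:R : R)) + /(congr1 (fun n => n%:R : R)).
rewrite !natrD => hC hU.
have := large_blocks true; have := large_blocks false; lra.
Qed.

Lemma sqdist_block_center_le : 0 <= alpha ->
  \sum_(l < d) (sign_point R (X i) - block_center t) 0 l ^+ 2 <= alpha.
Proof.
move=> alpha_ge0.
rewrite (@sqdist_sign_point_restrict _ _ _ (blockJ k X t true :|: blockJ k X t false)).
- have [d0|d_gt0] := posnP d; first by rewrite (_ : d%:R = 0) ?d0 // invr0 mulr0.
  by rewrite ler_pdivrMr ?ltr0n // card_unmarked_le.
- move=> l; rewrite finset.in_setU => /orP [] lJ.
    by rewrite lJ (blockJ_in_block i_in_t lJ).
  rewrite lJ (blockJ_in_block i_in_t lJ); case: ifP => // l1.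
  by have := blockJ_in_block i_in_t l1; rewrite (blockJ_in_block i_in_t lJ).
- move=> l; rewrite finset.in_setC finset.in_setU negb_or.
  by move=> /andP [/negbTE -> /negbTE ->].
Qed.

End Blocks.

Section Cost.
Variables (R : realType) (n d K : nat) (z : R).
Implicit Types (C : 'I_K.+1 -> 'rV[R]_d) (S : 'I_n -> 'rV[R]_d) (x : 'rV[R]_d).

Lemma point_cost_ge0 C x : 0 <= point_cost z C x.
Proof. by apply: le_bigmin => [|j _]; exact: powR_ge0. Qed.

Lemma le_point_cost C x r :
  (forall j, r <= norm2 (x - C j) `^ z) -> r <= point_cost z C x.
Proof. by move=> r_le; apply: le_bigmin => [|j _]; exact: r_le. Qed.

Lemma point_cost_le C x j : point_cost z C x <= norm2 (x - C j) `^ z.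
Proof. exact: bigmin_le. Qed.

Lemma cost_ge0 C S : 0 <= cost z C S.
Proof. by apply: sumr_ge0 => i _; exact: point_cost_ge0. Qed.

Lemma OPT_le_cost C S : OPT K z S <= cost z C S.
Proof.
apply: ge_inf; last by exists C.
by exists 0 => _ [C' ->]; exact: cost_ge0.
Qed.

End Cost.

Lemma measurable_bigminr (R : realType) (d0 : measure_display) (T : measurableType d0)
  (I : Type) (s : seq I) (f0 : T -> R) (f : I -> T -> R) :
  measurable_fun setT f0 -> (forall i, measurable_fun setT (f i)) ->
  measurable_fun setT (fun w => \big[Order.min/f0 w]_(i <- s) f i w).
Proof.
move=> mf0 mf; elim: s => [|a s IH]; first by under eq_fun do rewrite big_nil.
by under eq_fun do rewrite big_cons; exact: measurable_minr.
Qed.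

Lemma measurable_cost (R : realType) (d0 : measure_display) (Omega : measurableType d0)
  n d K (z : R) (f : Omega -> 'I_K.+1 -> 'rV[R]_d) (S : 'I_n -> 'rV[R]_d) :
  (forall j l, measurable_fun setT (fun w => f w j 0 l)) ->
  measurable_fun setT (fun w => cost z (f w) S).
Proof.
move=> mf; apply: measurable_sum => i; apply: measurable_bigminr => [|j].
all: under eq_fun do rewrite norm2_powR; apply: measurableT_comp (measurable_powR _) _.
all: apply: measurable_sum => l; under eq_fun do rewrite !mxE.
all: exact/measurable_funX/measurable_funB.
Qed.

Section Embedding.
Variables (R : realType) (n m d : nat) (X : 'I_m -> 'I_d -> bool).

Lemma embed_input_lt (i : 'I_n) (i_lt : (i < m)%N) :
  embed_input R X i = sign_point R (X (Ordinal i_lt)).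
Proof. by rewrite /embed_input insubT. Qed.

Lemma embed_input_ge (i : 'I_n) : (m <= i)%N -> embed_input R X i = 0.
Proof. by move=> i_ge; rewrite /embed_input insubF // ltnNge i_ge. Qed.

Lemma embed_input_in_ball (i : 'I_n) : in_ball (embed_input R X i).
Proof.
have [i_lt|i_ge] := ltnP i m; first by rewrite embed_input_lt; exact: sign_point_in_ball.
by rewrite embed_input_ge // /in_ball /norm2 big1 ?sqrtr0 // => l _; rewrite mxE expr0n.
Qed.

End Embedding.

Lemma sum_prefix_const (R : numDomainType) n m (a : R) : (m <= n)%N ->
  \sum_(i < n) (if (i < m)%N then a else 0) = m%:R * a.
Proof.
move=> m_le; rewrite -big_mkcond /= -(big_ord_widen n (fun _ => a) m_le).
by rewrite sumr_const card_ord mulr_natl.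
Qed.

Lemma powRV (R : realType) (x r : R) : 0 <= x -> x^-1 `^ r = (x `^ r)^-1.
Proof. by move=> x_ge0; rewrite -powR_inv1 // -powRrM mulN1r powRN. Qed.

Definition alpha_of (R : realType) (lambda z : R) : R :=
  (160 * (2 * lambda) `^ (2 / z))^-1.

Section Constants.
Variables (R : realType) (lambda z : R).

Lemma alpha_of_ge0 : 0 <= alpha_of lambda z.
Proof. by rewrite invr_ge0 mulr_ge0 ?powR_ge0. Qed.

Lemma alpha_of_le_half : 1 <= lambda -> 1 <= z -> alpha_of lambda z <= 1 / 2.
Proof.
move=> lambda_ge1 z_ge1.
have W_ge1 : 1 <= (2 * lambda) `^ (2 / z).
  have two_lambda_ge1 : 1 <= 2 * lambda by lra.
  rewrite -[leLHS](powRr0 (2 * lambda)); apply: (ler_powR two_lambda_ge1).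
  by rewrite divr_ge0 //; lra.
by rewrite /alpha_of div1r lef_pV2 ?posrE; nra.
Qed.

(* ((2 lambda)^(2/z))^(z/2) = 2 lambda cancels the lambda on the left. *)
Lemma lambda_alpha_of_powR_le : 1 <= lambda -> 1 <= z ->
  lambda * alpha_of lambda z `^ (z / 2) <= (1 / 40) `^ (z / 2) / 2.
Proof.
move=> lambda_ge1 z_ge1; have z_neq0 : z != 0 by apply/eqP => z0; lra.
rewrite /alpha_of powRV ?mulr_ge0 ?powR_ge0 // powRM ?powR_ge0 // -powRrM.
rewrite (_ : 2 / z * (z / 2) = 1); last by field.
rewrite powRr1; last by lra.
rewrite div1r powRV //.
set a := 40 `^ (z / 2); set b := 160 `^ (z / 2).
have a_gt0 : 0 < a by apply: powR_gt0.
have a_le_b : a <= b by apply: ge0_ler_powR; rewrite ?nnegrE ?divr_ge0 //; lra.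
rewrite (_ : lambda / (b * (2 * lambda)) = (2 * b)^-1); last first.
  by field; apply/andP; split; apply/lt0r_neq0; lra.
rewrite (_ : a^-1 / 2 = (2 * a)^-1); last by field; apply/lt0r_neq0.
by rewrite lef_pV2 ?posrE; lra.
Qed.

End Constants.

Lemma m_of_gt (R : realType) k (z xi : R) : (0 < k)%N -> 1 <= xi ->
  xi * 2 < (m_of k z xi)%:R * (1 / 40) `^ (z / 2).
Proof.
move=> k_gt0 xi_ge1; rewrite /m_of div1r powRV // natrM.
set a := 40 `^ (z / 2); set y := a * 2 * xi / k%:R.
have a_gt0 : 0 < a by apply: powR_gt0.
have kR_gt0 : (0 : R) < k%:R by rewrite ltr0n.
have y_lt : y < (Num.truncn (1 + y))%:R.
  by have := truncnS_gt (1 + y); rewrite -addn1 natrD; lra.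
have ky : k%:R * y = a * 2 * xi by rewrite /y; field; apply/lt0r_neq0.
have := y_lt; rewrite -(ltr_pM2l kR_gt0) ky => lt.
by rewrite ltr_pdivlMr //; lra.
Qed.

Section Measurability.
Variables (R : realType) (d0 : measure_display) (T : measurableType d0).
Local Open Scope classical_set_scope.

Lemma measurable_cost_le n d K (z r : R) (f : T -> 'I_K.+1 -> 'rV[R]_d)
    (S : 'I_n -> 'rV[R]_d) :
  (forall j l, measurable_fun setT (fun w => f w j 0 l)) ->
  measurable [set w | cost z (f w) S <= r].
Proof.
move=> mf; rewrite -[X in measurable X]setTI.
by apply: (measurable_fun_ler (measurable_cost z S mf) (measurable_cst r)).
Qed.

Lemma measurable_sign_event d (f : 'I_d -> T -> R) (A : set ('I_d -> bool)) :
  (forall l, measurable_fun setT (f l)) ->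
  measurable [set w | A (fun l => sgnb (f l w))].
Proof.
move=> mf.
have -> : [set w | A (fun l => sgnb (f l w))] =
    \bigcup_(q in [set q : {ffun 'I_d -> bool} | A q])
      \bigcap_(l in [set: 'I_d]) [set w | sgnb (f l w) = q l].
  apply/seteqP; split => [w Aw | w [q Aq qw]] /=.
    exists [ffun l => sgnb (f l w)] => [|l _] /=; last by rewrite ffunE.
    suff -> : [ffun l => sgnb (f l w)] = (fun l => sgnb (f l w)) :> ('I_d -> bool).
      by [].
    by apply: funext => l; rewrite ffunE.
  suff -> : (fun l => sgnb (f l w)) = q :> ('I_d -> bool) by [].
  by apply: funext => l; exact: qw.
apply: fin_bigcup_measurable => [|q _]; first exact: finite_finset.
apply: fin_bigcap_measurable => [|l _]; first exact: finite_finset.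
rewrite /sgnb -[X in measurable X]setTI.
exact: (measurable_fun_ler (measurable_cst (0 : R)) (mf l) measurableT (Y := [set q l])).
Qed.

Lemma measure_le_sum_cover (mu : {measure set T -> \bar R}) n (A : set T)
    (F : 'I_n -> set T) :
  measurable A -> (forall i, measurable (F i)) -> A `<=` \bigcup_i F i ->
  (mu A <= \sum_(i < n) mu (F i))%E.
Proof.
move=> mA mF AF; pose G k := oapp F set0 (insub k).
have GF (i : 'I_n) : G i = F i by rewrite /G valK.
rewrite (eq_bigr (fun i : 'I_n => mu (G i))) => [|i _]; last by rewrite GF.
apply: content_subadditive => // [k _|w /AF [i _ Fiw]].
  by rewrite /G; case: insub => //= i; exact: mF.
by rewrite -bigcup_mkord; exists i => //=; rewrite GF.
Qed.

End Measurability.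

Section HardInstance.
Variables (R : realType) (n d k : nat) (lambda z xi : R).
Let m := m_of k z xi.
Let alpha := alpha_of lambda z.
Variable X : 'I_m -> 'I_d -> bool.
Hypotheses (k_gt0 : (0 < k)%N) (z_ge1 : 1 <= z) (m_le_n : (m <= n)%N)
  (large_blocks : forall (t : 'I_k) b, (1 - alpha) / 2 * d%:R <= #|blockJ k X t b|%:R).
Let S : 'I_n -> 'rV[R]_d := embed_input R X.

Let block_of (i : 'I_m) : exists t : 'I_k, in_block k t i.
Proof.
have [t_lt it] := in_block_divn i k_gt0 (dvdn_mulr _ (dvdnn k)).
by exists (Ordinal t_lt).
Qed.

Let z_gt0 : 0 < z.
Proof. by have := z_ge1; lra. Qed.

Lemma cost_ge_of_disagree (C : 'I_k.+1 -> 'rV[R]_d) : alpha <= 1 / 2 ->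
  (forall j (t : 'I_k), ~ strongly_agrees R k (fun l => sgnb (C j 0 l)) X t) ->
  m%:R * (1 / 40) `^ (z / 2) <= cost z C S.
Proof.
move=> alpha_le disagree; rewrite /cost -(sum_prefix_const _ m_le_n).
apply: ler_sum => i _; case: ltnP => [i_lt|_]; last exact: point_cost_ge0.
have [t it] := block_of (Ordinal i_lt).
apply: le_point_cost => j; rewrite /S embed_input_lt.
apply: ge_norm2_powR; [exact: ltW | by [] |].
exact: ltW (sqdist_disagree_gt it (large_blocks t) alpha_le (disagree j t)).
Qed.

Lemma OPT_embed_input_le : OPT k z S <= m%:R * alpha `^ (z / 2).
Proof.
pose C (j : 'I_k.+1) := if (j < k)%N then block_center R k X j else 0.
apply: le_trans (OPT_le_cost z C S) _; rewrite /cost -(sum_prefix_const _ m_le_n).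
apply: ler_sum => i _; case: ltnP => [i_lt|i_ge].
  have [t it] := block_of (Ordinal i_lt).
  apply: le_trans (point_cost_le z C _ (widen_ord (leqnSn k) t)) _.
  rewrite /C /= ltn_ord /S embed_input_lt; apply: le_norm2_powR; first exact: ltW.
  exact: (sqdist_block_center_le it (large_blocks t) (alpha_of_ge0 _ _)).
apply: le_trans (point_cost_le z C _ ord_max) _.
rewrite /C /= ltnn /S embed_input_ge // subr0 norm2_powR big1 => [|l _].
  by rewrite powR0 // gt_eqF // divr_gt0.
by rewrite mxE expr0n.
Qed.

Lemma near_optimal_agrees (C : 'I_k.+1 -> 'rV[R]_d) : 1 <= lambda -> 1 <= xi ->
  cost z C S <= lambda * OPT k z S + xi ->
  exists j (t : 'I_k), strongly_agrees R k (fun l => sgnb (C j 0 l)) X t.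
Proof.
move=> lambda_ge1 xi_ge1 near_opt; apply: contrapT => no_agree.
have alpha_le := alpha_of_le_half lambda_ge1 z_ge1.
have disagree j (t : 'I_k) : ~ strongly_agrees R k (fun l => sgnb (C j 0 l)) X t.
  by move=> agree; apply: no_agree; exists j, t.
have := cost_ge_of_disagree alpha_le disagree.
have := ler_wpM2l (ler0n R m) (lambda_alpha_of_powR_le lambda_ge1 z_ge1).
have lambda_ge0 : 0 <= lambda by lra.
have := ler_wpM2l lambda_ge0 OPT_embed_input_le.
have := m_of_gt z k_gt0 xi_ge1.
(* m (1/40)^(z/2) <= cost <= lambda OPT + xi <= m (1/40)^(z/2) / 2 + xi < m (1/40)^(z/2) *)
lra.
Qed.

End HardInstance.

Theorem claim7p6 (R : realType) (d0 : measure_display) (Omega : measurableType d0)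
  (P : probability Omega R) (n d k : nat) (lambda z beta xi : R)
  (M : ('I_n -> 'rV[R]_d) -> Omega -> 'I_k.+1 -> 'rV[R]_d) :
  (0 < k)%N -> 1 <= lambda -> 1 <= z -> 0 < beta <= 1 -> 1 <= xi ->
  (m_of k z xi <= n)%N ->
  approx_alg P M lambda xi beta z ->
  weakly_accurate k (mech_tilde P M (m := m_of k z xi))
    ((160 * (2 * lambda) `^ (2 / z))^-1) (beta / k.+1%:R).
Proof.
move=> k_gt0 lambda_ge1 z_ge1 /andP [beta_gt0 _] xi_ge1 m_le_n approx.
split; first exact: dvdn_mulr.
move=> X large_blocks; set S : 'I_n -> 'rV[R]_d := embed_input R X.
have [_ [mM near_opt]] := approx S (embed_input_in_ball R X).
rewrite /mech_tilde -/S mulrC EFinM lee_pmul2l ?lte_fin ?invr_gt0 //.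
apply: le_trans near_opt (measure_le_sum_cover _ _ _ _).
- exact: measurable_cost_le.
- by move=> j; apply: measurable_sign_event => l; exact: mM.
- move=> w /(near_optimal_agrees k_gt0 z_ge1 m_le_n large_blocks lambda_ge1 xi_ge1).
  by move=> [j [t agree]]; exists j => //; exists t.
Qed.
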